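(* Let $n$ items have positive integer sizes $w_1\le w_2\le\dots\le w_n$, with total size $W=\sum_{i=1}^n w_i$, and let there be $m$ bins, bin $j$ having positive integer capacity $C_j$, fixed cost $f_j\ge 0$ and unit cost $c_j\ge 0$, where $\sum_{j=1}^m C_j\ge W$. For each bin set $r_j=f_j/C_j+c_j$, let $a_1,\dots,a_m$ be a permutation of $\{1,\dots,m\}$ with $r_{a_1}\le r_{a_2}\le\dots\le r_{a_m}$, and let $k$ be the minimum integer such that $\sum_{j=1}^{k}C_{a_j}\ge W$. Define $$Lb_1=\sum_{j=1}^{k-1}C_{a_j}r_{a_j}+\Big(W-\sum_{j=1}^{k-1}C_{a_j}\Big)r_{a_k}.$$ Let $z_1^*$ be the optimal value of the linear program $$\min \sum_{j=1}^m (f_jy_j+c_jl_j)$$ subject to $\sum_{j=1}^m x_{ij}=1$ for all $i\in\{1,\dots,n\}$; $\sum_{i=1}^n w_ix_{ij}=l_j$ for all $j\in\{1,\dots,m\}$; $l_j\le C_jy_j$ for all $j$; $0\le x_{ij}\le 1$, $0\le y_j\le 1$, $l_j\ge 0$ for all $i,j$. Then $z_1^*\ge Lb_1$.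
   Context: This linear program is the linear relaxation of an integer program for the Bin Packing with Usage Cost problem, in which each item is assigned to exactly one bin, the load $l_j$ of bin $j$ (total size of its items) may not exceed $C_j$, and a used bin $j$ costs $f_j+c_jl_j$; $y_j$ indicates whether bin $j$ is used and $x_{ij}$ whether item $i$ is in bin $j$. *)

From HB Require Import structures.
From mathcomp Require Import all_boot all_order all_algebra fingroup perm.
Set Implicit Arguments. Unset Strict Implicit. Unset Printing Implicit Defensive.
Import Order.TTheory GRing.Theory Num.Theory.
Local Open Scope ring_scope.

Section BPUC.
Variables (R : realFieldType) (n m : nat).

Definition bin_ratio (C : 'I_m -> nat) (f c : 'I_m -> R) (j : 'I_m) : R :=
  f j / (C j)%:R + c j.

Definition total_size (w : 'I_n -> nat) : nat := (\sum_(i < n) w i)%N.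

(* capacity of the first t bins in the order a (1-based: C_{a_1}+...+C_{a_t});
   a is a permutation of 'I_m, so position p (0-based) is bin a p. *)
Definition prefix_cap (C : 'I_m -> nat) (a : {perm 'I_m}) (t : nat) : nat :=
  (\sum_(p < m | (p < t)%N) C (a p))%N.

(* Lb_1, where kk = k - 1 is the 0-based position of the critical bin a_k. *)
Definition Lb1 (w : 'I_n -> nat) (C : 'I_m -> nat) (f c : 'I_m -> R)
    (a : {perm 'I_m}) (kk : 'I_m) : R :=
  \sum_(p < m | (p < kk)%N) (C (a p))%:R * bin_ratio C f c (a p)
  + ((total_size w)%:R - (prefix_cap C a kk)%:R) * bin_ratio C f c (a kk).

Definition lp_feasible (w : 'I_n -> nat) (C : 'I_m -> nat)
    (x : 'I_n -> 'I_m -> R) (y l : 'I_m -> R) : Prop :=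
  (forall i, \sum_(j < m) x i j = 1) /\
  (forall j, \sum_(i < n) (w i)%:R * x i j = l j) /\
  (forall j, l j <= (C j)%:R * y j) /\
  (forall i j, 0 <= x i j <= 1) /\
  (forall j, 0 <= y j <= 1) /\
  (forall j, 0 <= l j).

Definition lp_objective (f c : 'I_m -> R) (y l : 'I_m -> R) : R :=
  \sum_(j < m) (f j * y j + c j * l j).

End BPUC.
Arguments bin_ratio {R m}.
Arguments total_size {n}.
Arguments prefix_cap {m}.
Arguments Lb1 {R n m}.
Arguments lp_feasible {R n m}.
Arguments lp_objective {R m}.

From HB Require Import structures.
From mathcomp Require Import all_boot all_order all_algebra fingroup perm.
From mathcomp Require Import ring.
Set Implicit Arguments. Unset Strict Implicit. Unset Printing Implicit Defensive.
Import Order.TTheory GRing.Theory Num.Theory.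
Local Open Scope ring_scope.

(** Since [l_j <= C_j y_j], the cost of bin [j] is at least [r_j l_j], so the
    LP value is at least the cost of a fractional knapsack filling: loads [l_j]
    summing to [W] with [0 <= l_j <= C_j] and price [r_j] per unit.  Such a
    filling is cheapest when the bins are filled greedily by increasing [r_j],
    which is exactly [Lb_1]: against the price [r_{a_k}] of the critical bin,
    every unit moved out of a cheaper bin or into a dearer one costs extra. *)

Section GreedyFilling.
Variables (R : realDomainType) (m : nat) (r cap l : 'I_m -> R) (k : 'I_m).
Hypothesis r_mono : forall p q : 'I_m, (p <= q)%N -> r p <= r q.
Hypothesis l_ge0 : forall p, 0 <= l p.
Hypothesis l_le_cap : forall p, l p <= cap p.

Lemma greedy_filling_le :
  \sum_(p < m | (p < k)%N) cap p * r p
    + (\sum_(p < m) l p - \sum_(p < m | (p < k)%N) cap p) * r k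
  <= \sum_(p < m) r p * l p.
Proof.
have shift_greedy : \sum_(p < m | (p < k)%N) cap p * r p
    + (\sum_(p < m) l p - \sum_(p < m | (p < k)%N) cap p) * r k
  = r k * \sum_(p < m) l p + \sum_(p < m | (p < k)%N) (r p - r k) * cap p.
  rewrite [X in _ = _ + X](eq_bigr (fun p => cap p * r p - r k * cap p));
    last by move=> p _; ring.
  by rewrite sumrB -mulr_sumr; ring.
have shift_filling : \sum_(p < m) r p * l p
    = r k * \sum_(p < m) l p + \sum_(p < m) (r p - r k) * l p.
  by rewrite mulr_sumr -big_split; apply: eq_bigr => p _ /=; ring.
rewrite shift_greedy shift_filling lerD2l big_mkcond /=.
apply: ler_sum => p _; case: ifP => [lt_pk | /negbT].
- by rewrite ler_wnM2l // subr_le0 r_mono // ltnW.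
- by rewrite -leqNgt => le_kp; rewrite mulr_ge0 // subr_ge0 r_mono.
Qed.

End GreedyFilling.

Section LPRelaxation.
Variables (R : realFieldType) (n m : nat) (w : 'I_n -> nat) (C : 'I_m -> nat).
Variables (x : 'I_n -> 'I_m -> R) (y l : 'I_m -> R).
Hypothesis feas : lp_feasible w C x y l.

Lemma lp_load_ge0 j : 0 <= l j.
Proof. by case: feas => _ [_ [_ [_ [_ ]]]]. Qed.

Lemma lp_load_le_cap j : l j <= (C j)%:R.
Proof.
case: feas => _ [_ [lC [_ [y01 _]]]].
have /andP[_ y_le1] := y01 j.
by apply: le_trans (lC j) _; rewrite ler_piMr.
Qed.

Lemma lp_load_sum : \sum_(j < m) l j = (total_size w)%:R.
Proof.
case: feas => x_sum1 [load _].
rewrite /total_size natr_sum (eq_bigr _ (fun j _ => esym (load j))) exchange_big.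
by apply: eq_bigr => i _; rewrite -mulr_sumr x_sum1 mulr1.
Qed.

Lemma lp_objective_ge_ratio (f c : 'I_m -> R) :
  (forall j, (0 < C j)%N) -> (forall j, 0 <= f j) ->
  \sum_(j < m) bin_ratio C f c j * l j <= lp_objective f c y l.
Proof.
move=> C_gt0 f_ge0; case: feas => _ [_ [lC _]].
apply: ler_sum => j _; rewrite /bin_ratio mulrDl lerD2r -mulrA ler_wpM2l //.
by rewrite ler_pdivrMl ?ltr0n // mulrC.
Qed.

End LPRelaxation.

Theorem proposition1 (R : realFieldType) (n m : nat)
    (w : 'I_n -> nat) (C : 'I_m -> nat) (f c : 'I_m -> R)
    (a : {perm 'I_m}) (kk : 'I_m) :
  (forall i, (0 < w i)%N) ->
  (forall i j : 'I_n, (i <= j)%N -> (w i <= w j)%N) ->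
  (forall j, (0 < C j)%N) ->
  (forall j, 0 <= f j) ->
  (forall j, 0 <= c j) ->
  (total_size w <= \sum_(j < m) C j)%N ->
  (forall p q : 'I_m, (p <= q)%N -> bin_ratio C f c (a p) <= bin_ratio C f c (a q)) ->
  (* k = kk+1 is the minimum index with C_{a_1}+...+C_{a_k} >= W *)
  (total_size w <= prefix_cap C a kk.+1)%N ->
  (forall t : nat, (0 < t <= kk)%N -> (prefix_cap C a t < total_size w)%N) ->
  forall (x : 'I_n -> 'I_m -> R) (y l : 'I_m -> R),
    lp_feasible w C x y l ->
    Lb1 w C f c a kk <= lp_objective f c y l.
Proof.
(* The bound holds for every critical position [kk]: the choice of [k] only
   makes it tight, and the item sizes enter only through [W]. *)
move=> _ _ C_gt0 f_ge0 _ _ r_mono _ _ x y l feas.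
apply: le_trans (lp_objective_ge_ratio feas c C_gt0 f_ge0).
rewrite (reindex_inj (@perm_inj _ a)) /=.
have load_sum : \sum_(p < m) l (a p) = (total_size w)%:R.
  by rewrite -(lp_load_sum feas) [RHS](reindex_inj (@perm_inj _ a)).
rewrite /Lb1 -load_sum /prefix_cap natr_sum.
exact: greedy_filling_le kk r_mono (fun p => lp_load_ge0 feas (a p))
  (fun p => lp_load_le_cap feas (a p)).
Qed.
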